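(* Let $K$ be a compact hypergroup and let $\sigma$ be a non-degenerate probability measure on $K$. Then every weak$^*$ cluster point $\sigma_0$ in $M(K)$ of the sequence $\left(\frac1n\sum_{k=1}^n\sigma^k\right)_{n\geq1}$ is the normalized Haar measure on $K$.
   Context: $K$ is a compact hypergroup (Jewett/Bloom–Heyer sense), assumed to have a left Haar measure; the normalized Haar measure is the Haar measure of total mass one. $M(K)=C(K)^*$ is the measure algebra and $\sigma^k$ the $k$-fold convolution power of $\sigma$. For subsets $A,B\subseteq K$, $A*B=\bigcup_{a\in A,b\in B}\operatorname{supp}(\delta_a*\delta_b)$ and $A^n$ is the $n$-fold product. A measure $\mu\in M(K)$ is non-degenerate if $K=\overline{\bigcup_{n\geq1}(\operatorname{supp}|\mu|)^n}$. *)

From HB Require Import structures.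
From mathcomp Require Import all_boot all_order all_algebra.
From mathcomp Require Import all_classical all_reals topology normedtype.
Set Implicit Arguments. Unset Strict Implicit. Unset Printing Implicit Defensive.
Import Order.TTheory GRing.Theory Num.Theory.
Import numFieldNormedType.Exports.
Local Open Scope classical_set_scope.
Local Open Scope ring_scope.

(* Measures on a compact space K are represented (Riesz) as functionals on
   real functions, of which only the values on continuous functions matter. *)
Section Hypergroup.
Variables (R : realType) (K : topologicalType).

Definition Cfun (f : K -> R) : Prop := continuous f.

Definition functional := (K -> R) -> R.

Definition linear_on_C (mu : functional) : Prop :=
  forall (a : R) (f g : K -> R), Cfun f -> Cfun g ->
    mu (fun x => a * f x + g x) = a * mu f + mu g.

Definition bounded_on_C (mu : functional) : Prop :=
  exists C : R, forall (f : K -> R) (M : R), Cfun f ->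
    (forall x, `|f x| <= M) -> `|mu f| <= C * M.

Definition radon (mu : functional) : Prop := linear_on_C mu /\ bounded_on_C mu.

Definition positive_fn (mu : functional) : Prop :=
  forall f : K -> R, Cfun f -> (forall x, 0 <= f x) -> 0 <= mu f.

Definition prob (mu : functional) : Prop :=
  radon mu /\ positive_fn mu /\ mu (fun _ => 1) = 1.

Definition meq (mu nu : functional) : Prop := forall f, Cfun f -> mu f = nu f.

Definition dirac (x : K) : functional := fun f => f x.

Definition support (mu : functional) : set K :=
  [set x | forall U, nbhs x U ->
     exists f : K -> R, [/\ Cfun f, (forall y, ~ U y -> f y = 0) & mu f != 0]].

(* Jewett's axioms for a hypergroup; conv x y is the functional of the
   probability measure delta_x * delta_y. *)
Record hypergroup (conv : K -> K -> functional) (e : K) (inv : K -> K) : Prop := {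
  hg_prob : forall x y, prob (conv x y);
  hg_cont : forall f, Cfun f -> continuous (fun p : K * K => conv p.1 p.2 f);
  hg_supp_hit : forall U : set K, open U ->
     open [set p : K * K | support (conv p.1 p.2) `&` U !=set0];
  hg_supp_in : forall U : set K, open U ->
     open [set p : K * K | support (conv p.1 p.2) `<=` U];
  hg_assoc : forall x y z f, Cfun f ->
     conv x y (fun u => conv u z f) = conv y z (fun v => conv x v f);
  hg_unit : forall x f, Cfun f -> conv e x f = f x /\ conv x e f = f x;
  hg_inv_cont : continuous inv;
  hg_inv_invol : forall x, inv (inv x) = x;
  hg_inv_conv : forall x y f, Cfun f ->
     conv x y (fun z => f (inv z)) = conv (inv y) (inv x) f;
  hg_inv_supp : forall x y, support (conv x y) e <-> x = inv y
}.

Variables (conv : K -> K -> functional) (e : K).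

Definition mconv (mu nu : functional) : functional :=
  fun f => mu (fun x => nu (fun y => conv x y f)).

Fixpoint cpow (sigma : functional) (k : nat) : functional :=
  match k with
  | 0%N => dirac e
  | k'.+1 => mconv (cpow sigma k') sigma
  end.

Definition cesaro (sigma : functional) (n : nat) : functional :=
  fun f => (n%:R)^-1 * \sum_(1 <= k < n.+1) cpow sigma k f.

Definition setconv (A B : set K) : set K :=
  [set z | exists a b, [/\ A a, B b & support (conv a b) z]].

Fixpoint setpow (A : set K) (n : nat) : set K :=
  match n with
  | 0%N => [set e]
  | n'.+1 => setconv (setpow A n') A
  end.

Definition hg_nondegenerate (mu : functional) : Prop :=
  closure [set z | exists n, (0 < n)%N /\ setpow (support mu) n z] = setT.

Definition left_haar (om : functional) : Prop :=
  [/\ radon om, positive_fn om, (exists f, Cfun f /\ om f != 0) &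
      forall x f, Cfun f -> om (fun y => conv x y f) = om f].

Definition normalized_haar (om : functional) : Prop :=
  left_haar om /\ om (fun _ => 1) = 1.

Definition weak_star_cluster (s : nat -> functional) (mu : functional) : Prop :=
  forall (m : nat) (fs : 'I_m -> K -> R) (eps : R),
    (forall i, Cfun (fs i)) -> 0 < eps ->
    forall N : nat, exists n : nat,
      [/\ (1 <= n)%N, (N <= n)%N &
          forall i, `|s n (fs i) - mu (fs i)| < eps].

End Hypergroup.

From HB Require Import structures.
From Pilot Require Import Defs.
From mathcomp Require Import all_boot all_order all_algebra.
From mathcomp Require Import all_classical all_reals topology normedtype derive.
From mathcomp Require Import lra ring.

(* Testing the Cesaro means against [f] and against [x |-> sigma (f (x * .))] gives values
   differing by a telescoping term of size O(1/n), so a cluster point satisfies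
   [sigma0 * sigma = sigma0]. Hence, for continuous [f], [phi w = sigma0 (f (. * w))] is
   sigma-harmonic. At a maximum point [x0] of [phi], the maximum principle, propagated
   along the supports of the powers of [sigma], gives [phi (a * x0) = phi x0] for [a] in the
   semigroup generated by [supp sigma], hence for every [a] by non-degeneracy; since [e]
   lies in [supp (delta_(x0^-) * delta_x0)], [phi] is constant. So [sigma0] is right
   invariant, and Fubini against the left Haar measure [omega] gives
   [sigma0 f = sigma0 1 * omega f = omega f]. *)

Set Implicit Arguments.
Unset Strict Implicit.
Unset Printing Implicit Defensive.
Import Order.TTheory GRing.Theory Num.Theory.
Import numFieldNormedType.Exports.
Local Open Scope classical_set_scope.
Local Open Scope ring_scope.

Lemma eq_of_dist_le (R : realType) (a b c : R) : 0 <= c ->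
  (forall eps, 0 < eps -> `|a - b| <= c * eps) -> a = b.
Proof.
move=> c0 Hab; apply/eqP; rewrite -subr_eq0 -normr_le0.
apply/ler_addgt0Pr => eps eps0; rewrite add0r.
have c1 : 0 < c + 1 by rewrite ltr_wpDl.
apply: (le_trans (Hab _ (divr_gt0 eps0 c1))).
by rewrite mulrCA ger_pMr // ler_pdivrMr // mul1r lerDl.
Qed.

Section ContinuousFunctions.
Variables (R : realType) (K : topologicalType).
Implicit Types f g : K -> R.

Lemma Cfun_cst (c : R) : Cfun (fun _ : K => c).
Proof. exact: cst_continuous. Qed.

Lemma CfunD f g : Cfun f -> Cfun g -> Cfun (fun x => f x + g x).
Proof. by move=> cf cg x; exact: (continuousD (cf x) (cg x)). Qed.

Lemma CfunM f g : Cfun f -> Cfun g -> Cfun (fun x => f x * g x).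
Proof. by move=> cf cg x; exact: (continuousM (cf x) (cg x)). Qed.

Lemma CfunN f : Cfun f -> Cfun (fun x => - f x).
Proof. by move=> cf x; exact: (continuousN (cf x)). Qed.

Lemma CfunB f g : Cfun f -> Cfun g -> Cfun (fun x => f x - g x).
Proof. by move=> cf cg; apply: CfunD => //; apply: CfunN. Qed.

Lemma CfunZ (a : R) f : Cfun f -> Cfun (fun x => a * f x).
Proof. by move=> cf; apply: CfunM => //; apply: Cfun_cst. Qed.

Lemma Cfun_norm f : Cfun f -> Cfun (fun x => `|f x|).
Proof. by move=> cf x; exact: (continuous_comp (cf x) (@norm_continuous R R^o (f x))). Qed.

Lemma Cfun_sum (I : Type) (s : seq I) (F : I -> K -> R) :
  (forall i, Cfun (F i)) -> Cfun (fun x => \sum_(i <- s) F i x).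
Proof.
move=> cF; elim: s => [|i s IH].
  by under eq_fun do rewrite big_nil; apply: Cfun_cst.
by under eq_fun do rewrite big_cons; apply: CfunD.
Qed.

Definition jcont (G : K -> K -> R) := continuous (fun p : K * K => G p.1 p.2).

Lemma jcont_fix1 G : jcont G -> forall x, Cfun (G x).
Proof.
move=> cG x y; have cp : {for y, continuous (fun y' : K => (x, y'))}.
  by apply: cvg_pair; [exact: cvg_cst | exact: cvg_id].
exact: (continuous_comp cp (cG (x, y))).
Qed.

Lemma jcont_fix2 G : jcont G -> forall y, Cfun (fun x => G x y).
Proof.
move=> cG y x; have cp : {for x, continuous (fun x' : K => (x', y))}.
  by apply: cvg_pair; [exact: cvg_id | exact: cvg_cst].
exact: (continuous_comp cp (cG (x, y))).
Qed.

Lemma jcont_swap G : jcont G -> jcont (fun x y => G y x).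
Proof.
move=> cG [a b]; have cp : {for (a, b), continuous (fun p : K * K => (p.2, p.1))}.
  by apply: cvg_pair; [exact: cvg_snd | exact: cvg_fst].
exact: (continuous_comp cp (cG (b, a))).
Qed.

End ContinuousFunctions.
Arguments Cfun_cst {R K} c.
Arguments CfunZ {R K} a {f}.
Arguments jcont_fix1 {R K G} cG x.
Arguments jcont_fix2 {R K G} cG y.

Section LinearFunctionals.
Variables (R : realType) (K : topologicalType) (mu : functional R K).
Hypothesis mu_lin : linear_on_C mu.
Implicit Types f g : K -> R.

Lemma linC0 : mu (fun _ => 0) = 0.
Proof.
have := mu_lin 1 (Cfun_cst 0) (Cfun_cst 0).
by under eq_fun do rewrite mulr0 addr0; lra.
Qed.

Lemma linCD f g : Cfun f -> Cfun g -> mu (fun x => f x + g x) = mu f + mu g.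
Proof.
move=> cf cg; have := mu_lin 1 cf cg; rewrite mul1r => <-.
by congr mu; apply/funext => x; rewrite mul1r.
Qed.

Lemma linCZ a f : Cfun f -> mu (fun x => a * f x) = a * mu f.
Proof.
move=> cf; have := mu_lin a cf (Cfun_cst 0); rewrite linC0 addr0 => <-.
by congr mu; apply/funext => x; rewrite addr0.
Qed.

Lemma linCN f : Cfun f -> mu (fun x => - f x) = - mu f.
Proof. by move=> cf; rewrite -mulN1r -linCZ //; congr mu; apply/funext => x; rewrite mulN1r. Qed.

Lemma linCB f g : Cfun f -> Cfun g -> mu (fun x => f x - g x) = mu f - mu g.
Proof. by move=> cf cg; rewrite linCD ?linCN //; apply: CfunN. Qed.

Lemma linC_cst (c : R) : mu (fun _ => c) = c * mu (fun _ => 1).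
Proof. by rewrite -linCZ; [congr mu; apply/funext => x; rewrite mulr1 | exact: Cfun_cst]. Qed.

Lemma linC_sum (I : Type) (s : seq I) (F : I -> K -> R) : (forall i, Cfun (F i)) ->
  mu (fun x => \sum_(i <- s) F i x) = \sum_(i <- s) mu (F i).
Proof.
move=> cF; elim: s => [|i s IH].
  by rewrite big_nil -[RHS]linC0; congr mu; apply/funext => x; rewrite big_nil.
rewrite big_cons -IH -linCD //; last exact: Cfun_sum.
by congr mu; apply/funext => x; rewrite big_cons.
Qed.

Lemma linC_comb (I : Type) (s : seq I) (c : I -> R) (F : I -> K -> R) :
  (forall i, Cfun (F i)) ->
  mu (fun x => \sum_(i <- s) c i * F i x) = \sum_(i <- s) c i * mu (F i).
Proof.
move=> cF; rewrite (linC_sum s (F := fun i x => c i * F i x)) => [|i]; last exact: CfunZ.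
by apply: eq_bigr => i _; rewrite linCZ.
Qed.

End LinearFunctionals.

Section BoundedFunctionals.
Variables (R : realType) (K : topologicalType).
Implicit Types (mu : functional R K) (f g : K -> R).

Definition bounded_by mu (C : R) :=
  forall f M, Cfun f -> (forall x, `|f x| <= M) -> `|mu f| <= C * M.

Lemma radon_bound (x0 : K) mu : radon mu -> exists2 C, 0 <= C & bounded_by mu C.
Proof.
move=> [_ [C HC]]; exists `|C| => // f M cf fM.
apply: le_trans (HC f M cf fM) _; apply: ler_wpM2r; last exact: ler_norm.
exact: le_trans (fM x0).
Qed.

Lemma bounded_by_dist mu C f g eps : linear_on_C mu -> bounded_by mu C ->
  Cfun f -> Cfun g -> (forall x, `|f x - g x| <= eps) -> `|mu f - mu g| <= C * eps.
Proof. by move=> L B cf cg fg; rewrite -linCB //; apply: B => //; exact: CfunB. Qed.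

End BoundedFunctionals.

Section Probability.
Variables (R : realType) (K : topologicalType) (mu : functional R K).
Hypothesis mu_prob : prob mu.
Implicit Types f g : K -> R.

Lemma prob_lin : linear_on_C mu. Proof. by case: mu_prob => [[]]. Qed.
Lemma prob_pos : positive_fn mu. Proof. by case: mu_prob => _ []. Qed.
Lemma prob1 : mu (fun _ => 1) = 1. Proof. by case: mu_prob => _ []. Qed.

Lemma prob_cst (c : R) : mu (fun _ => c) = c.
Proof. by rewrite (linC_cst prob_lin) prob1 mulr1. Qed.

Lemma prob_le f g : Cfun f -> Cfun g -> (forall x, f x <= g x) -> mu f <= mu g.
Proof.
move=> cf cg fg; rewrite -subr_ge0 -(linCB prob_lin cg cf).
by apply: prob_pos => [|x]; [exact: CfunB | rewrite subr_ge0].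
Qed.

Lemma prob_le_cst f (m : R) : Cfun f -> (forall x, f x <= m) -> mu f <= m.
Proof. by move=> cf fm; rewrite -(prob_cst m); apply: prob_le => //; exact: Cfun_cst. Qed.

Lemma prob_norm f : Cfun f -> `|mu f| <= mu (fun x => `|f x|).
Proof.
move=> cf; have cnf := Cfun_norm cf; rewrite ler_norml; apply/andP; split.
  rewrite -(linCN prob_lin cnf); apply: (prob_le (CfunN cnf) cf) => x.
  by rewrite lerNl -normrN ler_norm.
by apply: (prob_le cf cnf) => x; rewrite ler_norm.
Qed.

Lemma prob_bounded : bounded_by mu 1.
Proof.
move=> f M cf fM; rewrite mul1r; apply: le_trans (prob_norm cf) _.
by apply: prob_le_cst => //; exact: Cfun_norm.
Qed.

Lemma prob_radon : radon mu.
Proof. by split; [exact: prob_lin | exists 1; exact: prob_bounded]. Qed.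

End Probability.

Lemma dirac_prob (R : realType) (K : topologicalType) (x : K) : prob (@dirac R K x).
Proof.
split; [split|split] => //.
- by exists 1 => f M _ fM; rewrite mul1r; exact: fM.
- by move=> f _ f0; exact: f0.
Qed.

Lemma prob_mixture (R : realType) (K : topologicalType) (mu : functional R K)
    (kap : K -> functional R K) :
  prob mu -> (forall x, prob (kap x)) -> (forall f, Cfun f -> Cfun (fun x => kap x f)) ->
  prob (fun f => mu (fun x => kap x f)).
Proof.
move=> Pmu Pk ck; have L := prob_lin Pmu; split; [split|split].
- move=> a f g cf cg /=.
  have -> : (fun x => kap x (fun y => a * f y + g y)) = (fun x => a * kap x f + kap x g).
    by apply/funext => x; rewrite (prob_lin (Pk x) a cf cg).
  by rewrite (linCD L (CfunZ a (ck f cf)) (ck g cg)) (linCZ L a (ck f cf)).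
- exists 1 => f M cf fM; rewrite mul1r; apply: le_trans (prob_norm Pmu (ck f cf)) _.
  apply: prob_le_cst => [//||x]; first by apply: Cfun_norm; exact: ck.
  by have := prob_bounded (Pk x) cf fM; rewrite mul1r.
- by move=> f cf f0; apply: (prob_pos Pmu) => [|x]; [exact: ck | exact: (prob_pos (Pk x))].
- rewrite -[RHS](prob1 Pmu); congr mu; apply/funext => x; exact: prob1.
Qed.

Lemma partition_approx (R : realType) (I T : Type) (s : seq I) (h : I -> T -> R)
    (G : T -> T -> R) (Gi : I -> T -> R) eps :
  (forall i x, 0 <= h i x) -> (forall x, \sum_(i <- s) h i x = 1) ->
  (forall i x, h i x != 0 -> forall y, `|G x y - Gi i y| < eps) ->
  forall x y, `|G x y - \sum_(i <- s) h i x * Gi i y| <= eps.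
Proof.
move=> h0 h1 hG x y.
rewrite -[G x y]mul1r -(h1 x) mulr_suml -sumrB.
apply: le_trans (ler_norm_sum _ _ _) _.
rewrite -[eps]mul1r -(h1 x) mulr_suml; apply: ler_sum => i _.
rewrite -mulrBr normrM ger0_norm //.
have [->|hn] := eqVneq (h i x) 0; first by rewrite !mul0r.
by rewrite ler_wpM2l // ltW // hG.
Qed.

Section CompactSpace.
Variables (R : realType) (K : topologicalType).
Hypothesis cptK : compact [set: K].
Implicit Types (f g : K -> R) (G : K -> K -> R) (mu nu : functional R K).

Lemma Cfun_max (x0 : K) f : Cfun f -> exists c, forall x, f x <= f c.
Proof.
move=> cf; have [c _ Hc] := compact_EVT_max (ex_intro _ x0 I) cptK (continuous_subspaceT cf).
by exists c => x; apply: Hc; exact: in_setT.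
Qed.

Lemma jcont_unif_near G : jcont G -> forall x0 (eps : R), 0 < eps ->
  \forall x \near x0, forall y, `|G x y - G x0 y| < eps.
Proof.
move=> cG x0 eps eps0.
have cover y : [set: K] y ->
    \forall y' \near y & x \near nbhs x0, `|G x y' - G x0 y'| < eps.
  move=> _; have /cvgrPdist_lt /(_ (eps / 2)) := cG (x0, y).
  rewrite divr_gt0 // => /(_ isT) [[A B] /= [nA nB] AB].
  exists (B, A) => [//|[y' x] [/= By' Ax] /=].
  have := AB (x, y') (conj Ax By'); have := AB (x0, y') (conj (nbhs_singleton nA) By').
  have := ler_distD (G x0 y) (G x y') (G x0 y'); rewrite /= [`|G x y' - G x0 y|]distrC; lra.
have := proj1 (compact_near_coveringP [set: K]) cptK K (nbhs x0)
  (fun x y => `|G x y - G x0 y| < eps) (nbhs_filter x0) cover.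
by apply: filterS => x Hx y; apply: Hx.
Qed.

Lemma Cfun_param nu C G : linear_on_C nu -> bounded_by nu C -> 0 <= C -> jcont G ->
  Cfun (fun x => nu (G x)).
Proof.
move=> L B C0 cG x0; apply/cvgrPdist_lt => eps eps0.
have C1 : 0 < C + 1 by rewrite ltr_wpDl.
apply: filterS (jcont_unif_near cG x0 (divr_gt0 eps0 C1)) => x Gx.
have D : `|nu (G x0) - nu (G x)| <= C * (eps / (C + 1)).
  apply: (bounded_by_dist L B (jcont_fix1 cG x0) (jcont_fix1 cG x)) => y.
  by rewrite distrC; apply/ltW/Gx.
by apply: (le_lt_trans D); rewrite mulrCA gtr_pMr // ltr_pdivrMr // mul1r ltrDl.
Qed.

Lemma prob_param_continuous nu G : prob nu -> jcont G -> Cfun (fun x => nu (G x)).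
Proof. by move=> Pnu; apply: Cfun_param (prob_lin Pnu) (prob_bounded Pnu) ler01. Qed.

(* If [g < m] at [z], a test function witnessing [z \in supp mu] on [{g < m - d}] is
   dominated by a multiple of [m - g], whose integral vanishes. *)
Lemma prob_max_on_support mu g (m : R) z : prob mu -> Cfun g -> (forall x, g x <= m) ->
  mu g = m -> Defs.support mu z -> g z = m.
Proof.
move=> Pmu cg gm mug sz; apply/eqP; rewrite eq_le gm /= leNgt; apply/negP => gzm.
pose d := (m - g z) / 2.
have d0 : 0 < d by rewrite divr_gt0 // subr_gt0.
pose U := [set y | g y < m - d].
have oU : open U := proj1 (continuousP g) cg _ (@open_lt _ (m - d)).
have Uz : U z by rewrite /U /= /d; lra.
have [f [cf fU muf]] := sz U (open_nbhs_nbhs (conj oU Uz)).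
have [c fc] := Cfun_max z (Cfun_norm cf).
have cmg : Cfun (fun y => m - g y) by apply: CfunB => //; exact: Cfun_cst.
have f_le y : `|f y| <= `|f c| / d * (m - g y).
  have [Uy|nUy] := pselect (U y); last first.
    by rewrite fU // normr0 mulr_ge0 ?divr_ge0 ?subr_ge0 // ltW.
  apply: le_trans (fc y) _; rewrite mulrAC ler_pdivlMr // ler_wpM2l //.
  by move: Uy; rewrite /U /=; lra.
have := prob_le Pmu (Cfun_norm cf) (CfunZ (`|f c| / d) cmg) f_le.
rewrite (linCZ (prob_lin Pmu) _ cmg) (linCB (prob_lin Pmu) (Cfun_cst m) cg).
rewrite prob_cst // mug subrr mulr0 => mu_f.
move: muf; rewrite -normr_eq0 eq_le normr_ge0 andbT.
by rewrite (le_trans (prob_norm Pmu cf) mu_f).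
Qed.

Lemma iterated_separable_dist (I : Type) mu nu Cm Cn G (s : seq I) (a b : I -> K -> R) eps :
  linear_on_C mu -> linear_on_C nu -> bounded_by mu Cm -> bounded_by nu Cn -> 0 <= Cn ->
  jcont G -> (forall i, Cfun (a i)) -> (forall i, Cfun (b i)) ->
  (forall x y, `|G x y - \sum_(i <- s) a i x * b i y| <= eps) ->
  `|mu (fun x => nu (G x)) - \sum_(i <- s) mu (a i) * nu (b i)| <= Cm * (Cn * eps).
Proof.
move=> Lm Ln Bm Bn Cn0 cG ca cb GH.
have -> : \sum_(i <- s) mu (a i) * nu (b i) = mu (fun x => \sum_(i <- s) nu (b i) * a i x).
  by rewrite (linC_comb Lm) //; apply: eq_bigr => i _; rewrite mulrC.
apply: (bounded_by_dist Lm Bm (Cfun_param Ln Bn Cn0 cG)) => [|x].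
  by apply: Cfun_sum => i; apply: CfunZ.
have -> : \sum_(i <- s) nu (b i) * a i x = nu (fun y => \sum_(i <- s) a i x * b i y).
  by rewrite (linC_comb Ln) //; apply: eq_bigr => i _; rewrite mulrC.
apply: (bounded_by_dist Ln Bn (jcont_fix1 cG x)) => //.
by apply: Cfun_sum => i; apply: CfunZ.
Qed.

End CompactSpace.

Section PartitionOfUnity.
Variables (R : realType) (K : topologicalType) (x0 : K).
Hypotheses (hsdf : hausdorff_space K) (cptK : compact [set: K]).

Lemma Urysohn_bump x (U : set K) : nbhs x U ->
  exists g : K -> R, [/\ Cfun g, forall y, 0 <= g y, g x = 1 & forall y, g y != 0 -> U y].
Proof.
move=> nU; have us : uniform_separator (~` U°) [set x].
  apply: (proj1 (@normal_separatorP R K) (compact_normal hsdf cptK)).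
  - exact: open_closedC (open_interior _).
  - exact: accessible_closed_set1 (hausdorff_accessible hsdf) x.
  - by rewrite -subset0 => y [nUy /= yx]; apply: nUy; rewrite yx.
pose g := Urysohn (~` U°) [set x] : K -> R.
exists g; split.
- exact: Urysohn_continuous.
- move=> y; have : range g (g y) by exists y.
  by move/Urysohn_range; rewrite /= in_itv /= => /andP[].
- by apply: (Urysohn_sub1 us); exists x.
- move=> y gy; apply: interior_subset; apply: contrapT => nUy.
  by move/eqP: gy; apply; apply: (Urysohn_sub0 us); exists y.
Qed.

(* [compact_cover] is stated for pointed spaces. *)
Definition pointedK : Type := K.
HB.instance Definition _ := Topological.on pointedK.
HB.instance Definition _ := isPointed.Build pointedK x0.

Lemma finite_subcover (O : K -> set K) : (forall x, open (O x)) -> (forall x, O x x) ->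
  exists s : seq K, forall y, exists2 x, x \in s & O x y.
Proof.
move=> oO Ox; have : @compact pointedK setT := cptK; rewrite compact_cover.
move=> /(_ K setT O (fun i _ => oO i) (fun y _ => ex_intro2 _ _ y I (Ox y))) [D _ HD].
by exists (finmap.enum_fset D) => y; have [x xD Oxy] := HD y I; exists x.
Qed.

Lemma partition_of_unity (P : K -> set K) : (forall x, nbhs x (P x)) ->
  exists (s : seq K) (h : K -> K -> R),
  [/\ forall x, Cfun (h x), forall x y, 0 <= h x y,
      forall x y, h x y != 0 -> P x y & forall y, \sum_(x <- s) h x y = 1].
Proof.
move=> nP; have /choice [g /all_and4 [gc g0 g1 gP]] := fun x => Urysohn_bump (nP x).
pose O x := [set y | 1 / 2 < g x y].
have oO x : open (O x) := proj1 (continuousP (g x)) (gc x) _ (@open_gt R (1 / 2)).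
have Ox x : O x x by rewrite /O /= g1 ltr_pdivrMr // mul1r ltr1n.
have [s cover_s] := finite_subcover oO Ox.
pose S y := \sum_(x <- s) g x y.
have S_gt0 y : 0 < S y.
  have [x xs Oxy] := cover_s y.
  rewrite lt_def psumr_neq0 ?sumr_ge0 ?andbT //; apply/hasP; exists x => //.
  by apply: lt_trans Oxy; rewrite divr_gt0.
have Sc : Cfun S by apply: Cfun_sum.
exists s, (fun x y => g x y / S y); split.
- move=> x; apply: CfunM => // y.
  by apply: continuousV; [exact: lt0r_neq0 (S_gt0 y) | exact: Sc].
- by move=> x y; rewrite divr_ge0 // ltW.
- by move=> x y; rewrite mulf_eq0 negb_or => /andP [/gP].
- by move=> y; rewrite -mulr_suml divff //; exact: lt0r_neq0 (S_gt0 y).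
Qed.

(* [G] is uniformly approximated by [\sum_i h i x * G x_i y] for a partition of unity [h]
   subordinate to the tubes around the [x_i], and on such sums both iterated integrals are
   [\sum_i mu (h i) * nu (G x_i)]. *)
Lemma fubini (mu nu : functional R K) (G : K -> K -> R) : radon mu -> radon nu -> jcont G ->
  mu (fun x => nu (G x)) = nu (fun y => mu (fun x => G x y)).
Proof.
move=> rmu rnu cG.
have [Cm Cm0 Bm] := radon_bound x0 rmu.
have [Cn Cn0 Bn] := radon_bound x0 rnu.
have C0 : 0 <= 2 * (Cm * Cn) by rewrite !mulr_ge0.
apply: (eq_of_dist_le C0) => eps eps0.
have [s [h [hc h0 hG h1]]] := partition_of_unity (fun x' => jcont_unif_near cptK cG x' eps0).
have approx := partition_approx h0 h1 hG.
have D1 := iterated_separable_dist cptK rmu.1 rnu.1 Bm Bn Cn0 cG hc (jcont_fix1 cG) approx.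
have approx' y x : `|G x y - \sum_(i <- s) G i y * h i x| <= eps.
  by under eq_bigr do rewrite mulrC; exact: approx.
have D2 := iterated_separable_dist cptK rnu.1 rmu.1 Bn Bm Cm0 (jcont_swap cG)
  (jcont_fix1 cG) hc approx'.
rewrite (eq_bigr (fun i => mu (h i) * nu (G i))) in D2; last by move=> i _; rewrite mulrC.
apply: le_trans (ler_distD (\sum_(i <- s) mu (h i) * nu (G i)) _ _) _.
rewrite [X in _ + X]distrC (_ : _ * eps = Cm * (Cn * eps) + Cn * (Cm * eps)); last by ring.
exact: lerD.
Qed.

End PartitionOfUnity.

Section RandomWalk.
Variables (R : realType) (K : topologicalType) (conv : K -> K -> functional R K)
  (e : K) (inv : K -> K).
Hypotheses (hsdf : hausdorff_space K) (cptK : compact [set: K])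
  (HG : hypergroup conv e inv).
Implicit Types (f phi : K -> R) (sigma mu nu : functional R K).

Let conv_prob x y : prob (conv x y) := hg_prob HG x y.
Let conv_jcont f (cf : Cfun f) : jcont (fun x y => conv x y f) := hg_cont HG cf.

Lemma conv_right_prob nu b : prob nu -> prob (fun f => nu (fun v => conv b v f)).
Proof. by move=> Pnu; apply: prob_mixture => // f cf; exact: jcont_fix1 (conv_jcont cf) b. Qed.

Lemma conv_left_prob nu x : prob nu -> prob (fun f => nu (fun v => conv v x f)).
Proof. by move=> Pnu; apply: prob_mixture => // f cf; exact: jcont_fix2 (conv_jcont cf) x. Qed.

Lemma mconv_prob mu nu : prob mu -> prob nu -> prob (mconv conv mu nu).
Proof.
move=> Pmu Pnu; apply: prob_mixture => // [x|f cf]; first exact: conv_right_prob.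
exact: (prob_param_continuous cptK Pnu (conv_jcont cf)).
Qed.

Lemma cpow_prob sigma k : prob sigma -> prob (cpow conv e sigma k).
Proof. by move=> Ps; elim: k => [|k IH] /=; [exact: dirac_prob | exact: mconv_prob]. Qed.

Lemma cesaro1 sigma n : prob sigma -> (0 < n)%N -> cesaro conv e sigma n (fun _ => 1) = 1.
Proof.
move=> Ps n0; rewrite /cesaro; under eq_bigr => k _ do rewrite (prob1 (cpow_prob k Ps)).
by rewrite sumr_const_nat subn1 mulVf // pnatr_eq0 -lt0n.
Qed.

(* [sigma^k] applied to [x |-> sigma (fun y => conv x y f)] is [sigma^(k+1) f], so the
   difference telescopes. *)
Lemma cesaro_shift_dist sigma f (B : R) n : prob sigma -> Cfun f ->
  (forall x, `|f x| <= B) -> (0 < n)%N ->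
  `|cesaro conv e sigma n (fun x => sigma (fun y => conv x y f))
    - cesaro conv e sigma n f| <= 2 * B / n%:R.
Proof.
move=> Ps cf fB n0.
have -> : cesaro conv e sigma n (fun x => sigma (fun y => conv x y f))
    - cesaro conv e sigma n f = n%:R^-1 * (cpow conv e sigma n.+1 f - cpow conv e sigma 1 f).
  rewrite /cesaro -mulrBr -sumrB; congr (_ * _).
  exact: (telescope_sumr (fun k => cpow conv e sigma k f) (isT : (1 <= n.+1)%N)).
rewrite normrM ger0_norm ?invr_ge0 // mulrC ler_pM2r ?invr_gt0 ?ltr0n //.
apply: le_trans (ler_normB _ _) _.
have := prob_bounded (cpow_prob n.+1 Ps) cf fB.
have := prob_bounded (cpow_prob 1 Ps) cf fB.
rewrite !mul1r; lra.
Qed.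

Lemma cluster_mass1 sigma sigma0 : prob sigma ->
  weak_star_cluster (cesaro conv e sigma) sigma0 -> sigma0 (fun _ => 1) = 1.
Proof.
move=> Ps cl; symmetry; apply: (eq_of_dist_le ler01) => eps eps0.
have [n [n1 _ H]] := cl 1%N (fun _ _ => 1) eps (fun _ => Cfun_cst 1) eps0 0%N.
by have := H ord0; rewrite /= cesaro1 // mul1r => /ltW.
Qed.

Lemma cluster_mconv_invariant sigma sigma0 : prob sigma ->
  weak_star_cluster (cesaro conv e sigma) sigma0 -> meq (mconv conv sigma0 sigma) sigma0.
Proof.
move=> Ps cl f cf; rewrite /mconv.
have [c fc] := Cfun_max cptK e (Cfun_norm cf).
have cg : Cfun (fun x => sigma (fun y => conv x y f)).
  exact: (prob_param_continuous cptK Ps (conv_jcont cf)).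
apply: (eq_of_dist_le (_ : 0 <= 3)) => // eps eps0.
pose N := (Num.truncn (2 * `|f c| / eps)).+1.
pose fs (i : 'I_2) := if val i == 0%N then f else (fun x => sigma (fun y => conv x y f)).
have [|n [n1 nN H]] := cl 2%N fs eps _ eps0 N; first by move=> i; rewrite /fs; case: ifP.
have D := cesaro_shift_dist Ps cf fc n1.
have Dn : 2 * `|f c| / n%:R <= eps.
  rewrite ler_pdivrMr ?ltr0n // [eps * _]mulrC -ler_pdivrMr //.
  by apply/ltW/(lt_le_trans (truncnS_gt _)); rewrite ler_nat.
have := H ord0; have := H (Ordinal (isT : (1 < 2)%N)); rewrite /fs /=.
set g := (fun x => sigma (fun y => conv x y f)) in D *.
have := ler_distD (cesaro conv e sigma n g) (sigma0 g) (sigma0 f).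
have := ler_distD (cesaro conv e sigma n f) (cesaro conv e sigma n g) (sigma0 f).
rewrite [`|cesaro _ _ _ _ g - sigma0 g|]distrC; lra.
Qed.

Definition harmonic sigma phi := forall x, phi x = sigma (fun v => conv v x phi).

Lemma invariant_translate_harmonic sigma sigma0 f : prob sigma -> radon sigma0 ->
  meq (mconv conv sigma0 sigma) sigma0 -> Cfun f ->
  harmonic sigma (fun w => sigma0 (fun u => conv u w f)).
Proof.
move=> Ps R0 inv0 cf x /=.
rewrite -(inv0 _ (jcont_fix2 (conv_jcont cf) x)) /mconv.
have -> : (fun u => sigma (fun v => conv u v (fun y => conv y x f))) =
    (fun u => sigma (fun v => conv v x (fun w => conv u w f))).
  by apply/funext => u; congr sigma; apply/funext => v; exact: (hg_assoc HG u v x cf).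
exact: (fubini e hsdf cptK R0 (prob_radon (conv_left_prob x Ps)) (conv_jcont cf)).
Qed.

(* Induction on [a \in supp (delta_a' * delta_b)], [b \in supp sigma]: by harmonicity
   [z |-> nu (fun v => conv z v phi) <= m] has [sigma]-mean [m], so it is [m] at [b], and
   associativity reduces its value at [a] to the induction hypothesis at [a']. *)
Lemma harmonic_max_support sigma phi (m : R) : prob sigma -> Cfun phi ->
  (forall x, phi x <= m) -> harmonic sigma phi ->
  forall n a, setpow conv e (Defs.support sigma) n a ->
  forall nu, prob nu -> nu phi = m -> nu (fun v => conv a v phi) = m.
Proof.
move=> Ps cphi phim harm; elim=> [|n IH] a /=.
  move=> -> nu Pnu <-; congr nu; apply/funext => v; exact: (hg_unit HG v cphi).1.
move=> [a' [b [Sa' Sb supp_a]]] nu Pnu num.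
have cG : jcont (fun z v => conv z v phi) := conv_jcont cphi.
have ck : Cfun (fun z => nu (fun v => conv z v phi)).
  exact: (prob_param_continuous cptK Pnu cG).
have km z : nu (fun v => conv z v phi) <= m.
  apply: (prob_le_cst Pnu (jcont_fix1 cG z)) => v.
  exact: (prob_le_cst (conv_prob z v) cphi phim).
have kb : nu (fun v => conv b v phi) = m.
  apply: (prob_max_on_support cptK Ps ck km _ Sb).
  rewrite (fubini e hsdf cptK (prob_radon Ps) (prob_radon Pnu) cG) -num.
  by congr nu; apply/funext => v; rewrite -harm.
apply: (prob_max_on_support cptK (conv_prob a' b) ck km _ supp_a).
rewrite (fubini e hsdf cptK (prob_radon (conv_prob a' b)) (prob_radon Pnu) cG).
have -> : (fun v => conv a' b (fun w => conv w v phi)) =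
    (fun v => conv b v (fun w => conv a' w phi)).
  by apply/funext => v; exact: (hg_assoc HG a' b v cphi).
exact: (IH a' Sa' _ (conv_right_prob b Pnu) kb).
Qed.

Lemma harmonic_max_orbit sigma phi x0 : prob sigma -> hg_nondegenerate conv e sigma ->
  Cfun phi -> (forall x, phi x <= phi x0) -> harmonic sigma phi ->
  forall a, conv a x0 phi = phi x0.
Proof.
move=> Ps nd cphi phim harm a.
pose psi a := conv a x0 phi.
have psi_closed : closed (psi @^-1` [set r | r = phi x0]).
  exact: (@preimage_closed K R psi _ (fun t _ => jcont_fix2 (conv_jcont cphi) x0 t)
    (closed_eq (y := phi x0))).
have sub : [set z | exists n, (0 < n)%N /\ setpow conv e (Defs.support sigma) n z]
    `<=` psi @^-1` [set r | r = phi x0].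
  move=> z [n [_ Hz]].
  exact: (harmonic_max_support Ps cphi phim harm Hz (dirac_prob R x0) erefl).
have := closureS sub; rewrite nd -(proj1 (closure_id _) psi_closed).
by move/(_ a I).
Qed.

(* [v |-> conv w v phi <= phi x0] has mean [phi x0] against [delta_(inv x0) * delta_x0],
   whose support contains [e]. *)
Lemma harmonic_constant sigma phi : prob sigma -> hg_nondegenerate conv e sigma ->
  Cfun phi -> harmonic sigma phi -> forall w, phi w = phi e.
Proof.
move=> Ps nd cphi harm.
have [x0 phim] := Cfun_max cptK e cphi.
have orbit := harmonic_max_orbit Ps nd cphi phim harm.
suff phi_max w : phi w = phi x0 by move=> w; rewrite !phi_max.
have cg : Cfun (fun v => conv w v phi) := jcont_fix1 (conv_jcont cphi) w.
have gm v : conv w v phi <= phi x0 := prob_le_cst (conv_prob w v) cphi phim.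
have mug : conv (inv x0) x0 (fun v => conv w v phi) = phi x0.
  rewrite -(hg_assoc HG w (inv x0) x0 cphi) -[RHS](prob_cst (conv_prob w (inv x0))).
  by congr (conv w (inv x0)); apply/funext => u; exact: orbit.
have e_supp : Defs.support (conv (inv x0) x0) e := (hg_inv_supp HG (inv x0) x0).2 erefl.
by rewrite -(prob_max_on_support cptK (conv_prob (inv x0) x0) cg gm mug e_supp)
  (hg_unit HG w cphi).2.
Qed.

Lemma cluster_right_invariant sigma sigma0 : prob sigma -> hg_nondegenerate conv e sigma ->
  radon sigma0 -> weak_star_cluster (cesaro conv e sigma) sigma0 ->
  forall x f, Cfun f -> sigma0 (fun y => conv y x f) = sigma0 f.
Proof.
move=> Ps nd R0 cl x f cf.
have [C C0 BC] := radon_bound e R0.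
have cphi : Cfun (fun w => sigma0 (fun u => conv u w f)).
  exact: (Cfun_param cptK R0.1 BC C0 (jcont_swap (conv_jcont cf))).
have harm := invariant_translate_harmonic Ps R0 (cluster_mconv_invariant Ps cl) cf.
rewrite (harmonic_constant Ps nd cphi harm x) /=.
by congr sigma0; apply/funext => y; exact: (hg_unit HG y cf).2.
Qed.

End RandomWalk.

Theorem corollary4p13 (R : realType) (K : topologicalType)
  (conv : K -> K -> functional R K) (e : K) (inv : K -> K) :
  hausdorff_space K -> compact [set: K] -> hypergroup conv e inv ->
  forall sigma : functional R K, prob sigma -> hg_nondegenerate conv e sigma ->
  forall omega : functional R K, normalized_haar conv omega ->
  forall sigma0 : functional R K, radon sigma0 ->
  weak_star_cluster (cesaro conv e sigma) sigma0 ->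
  meq sigma0 omega.
Proof.
move=> hsdf cptK HG sigma Ps nd omega [[Rom _ _ om_inv] om1] sigma0 R0 cl f cf.
have s0_inv := cluster_right_invariant hsdf cptK HG Ps nd R0 cl.
have cG : jcont (fun x y => conv x y f) := hg_cont HG cf.
have := fubini e hsdf cptK R0 Rom cG.
have -> : (fun x => omega (fun y => conv x y f)) = fun _ => omega f.
  by apply/funext => x; exact: om_inv.
have -> : (fun y => sigma0 (fun x => conv x y f)) = fun _ => sigma0 f.
  by apply/funext => y; exact: s0_inv.
by rewrite (linC_cst R0.1) (linC_cst Rom.1) (cluster_mass1 cptK HG Ps cl) om1 !mulr1.
Qed.
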